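(* Let $\mathcal A$ be cocomplete, $(M,\eta)$ a pointed endofunctor, and $\lambda:MH\to HM$ a distributive law of $(M,\eta)$ over $H$ with $\lambda$-interpretation $b:MC\to C$. Then for every morphism $e:X\to HMX$ there is a unique $e^\dagger:X\to C$ with $c\cdot e^\dagger=Hb\cdot HMe^\dagger\cdot e$.
   Context: $H:\mathcal A\to\mathcal A$ is a functor with terminal coalgebra $c:C\to HC$. A pointed endofunctor is a functor $M$ with a natural transformation $\eta:\mathrm{Id}\to M$. A distributive law of $(M,\eta)$ over $H$ is a natural transformation $\lambda:MH\to HM$ with $\lambda\cdot\eta H=H\eta$. Its $\lambda$-interpretation is the unique morphism $b:MC\to C$ with $c\cdot b=Hb\cdot\lambda_C\cdot Mc$ (i.e. the unique coalgebra homomorphism from $(MC,\lambda_C\cdot Mc)$ to $(C,c)$); it satisfies $b\cdot\eta_C=\mathrm{id}_C$. *)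

Set Universe Polymorphism.
Set Implicit Arguments.

Record Category := {
  Ob :> Type;
  Hom : Ob -> Ob -> Type;
  idm : forall A, Hom A A;
  comp : forall A B C, Hom B C -> Hom A B -> Hom A C;
  comp_id_l : forall A B (f : Hom A B), comp (idm B) f = f;
  comp_id_r : forall A B (f : Hom A B), comp f (idm A) = f;
  comp_assoc : forall A B C D (h : Hom C D) (g : Hom B C) (f : Hom A B),
      comp h (comp g f) = comp (comp h g) f
}.
Arguments idm {c} A.
Arguments comp {c A B C} g f.
Declare Scope cat_scope.
Notation "g \o f" := (comp g f) (at level 40, left associativity) : cat_scope.
Open Scope cat_scope.

Unset Implicit Arguments.
Record Functor (J A : Category) := {
  Fob :> J -> A;
  Fmap : forall X Y, Hom J X Y -> Hom A (Fob X) (Fob Y);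
  Fmap_id : forall X : J, Fmap X X (@idm J X) = @idm A (Fob X);
  Fmap_comp : forall X Y Z (g : Hom J Y Z) (f : Hom J X Y),
      Fmap X Z (@comp J X Y Z g f) = @comp A _ _ _ (Fmap Y Z g) (Fmap X Y f)
}.
Arguments Fmap {J A} f0 {X Y} _.

Definition IsCocone (J A : Category) (D : Functor J A) (L : A)
    (inj : forall j : J, Hom A (D j) L) : Prop :=
  forall i j (u : Hom J i j), inj j \o Fmap D u = inj i.

Definition IsColimit (J A : Category) (D : Functor J A) (L : A)
    (inj : forall j : J, Hom A (D j) L) : Prop :=
  IsCocone J A D L inj /\
  forall (X : A) (f : forall j : J, Hom A (D j) X), IsCocone J A D X f ->
    exists! h : Hom A L X, forall j, h \o inj j = f j.

(* A is cocomplete: every small diagram has a colimit.  "Small" means the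
   indexing category lives in a universe strictly below that of A. *)
Definition Cocomplete@{s s' u u' | s < u, s' < u +} (A : Category@{u u'}) : Prop :=
  forall (J : Category@{s s'}) (D : Functor J A),
    exists (L : A) (inj : forall j : J, Hom A (D j) L), IsColimit J A D L inj.

Definition IsTerminalCoalgebra (A : Category) (H : Functor A A) (C : A)
    (c : Hom A C (H C)) : Prop :=
  forall (X : A) (x : Hom A X (H X)),
    exists! h : Hom A X C, c \o h = Fmap H h \o x.

Definition IsNatPoint (A : Category) (M : Functor A A)
    (eta : forall X : A, Hom A X (M X)) : Prop :=
  forall X Y (f : Hom A X Y), eta Y \o f = Fmap M f \o eta X.

Definition IsDistributiveLaw (A : Category) (H M : Functor A A)
    (eta : forall X : A, Hom A X (M X))
    (lam : forall X : A, Hom A (M (H X)) (H (M X))) : Prop :=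
  (forall X Y (f : Hom A X Y),
      lam Y \o Fmap M (Fmap H f) = Fmap H (Fmap M f) \o lam X) /\
  (forall X : A, lam X \o eta (H X) = Fmap H (eta X)).

(* b : MC -> C is the lambda-interpretation: the coalgebra homomorphism
   from (MC, lambda_C . Mc) to (C, c) (unique by terminality). *)
Definition IsLambdaInterpretation (A : Category) (H M : Functor A A)
    (lam : forall X : A, Hom A (M (H X)) (H (M X))) (C : A)
    (c : Hom A C (H C)) (b : Hom A (M C) C) : Prop :=
  c \o b = Fmap H b \o (lam C \o Fmap M c).


(* Unfold e : X -> HMX into the chain
     X_0 = X,  X_(n+1) = M X_n,   e_0 = e,  e_(n+1) = lam_(X_(n+1)) . M e_n.
   A "solution" of a chain (Y_n, f_n : Y_n -> H Y_(n+1)) is a family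
   g_n : Y_n -> C with c . g_n = H g_(n+1) . f_n.  Cocompleteness yields the
   coproduct L of the Y_n; it carries a coalgebra structure z : L -> HL, and
   solutions are exactly the copairings that are coalgebra morphisms
   (L, z) -> (C, c).  Hence, by terminality of C, every chain has a unique
   solution.  Applying b . M(-) to a solution of the chain of e produces a
   solution of the shifted chain (this uses only the naturality of lam and
   the defining equation of b), so the unique solution h satisfies
   h_1 = b . M h_0, and h_0 solves the equation for e^dagger.  Conversely a
   solution d of that equation extends to the chain solution
   (d, b . M d, b . M(b . M d), ...), so d = h_0. *)

(* The discrete category on nat, and the diagram given by a sequence of
   objects; colimits of such diagrams are countable coproducts. *)
Definition discr : Category.
Proof.
  refine {| Ob := nat; Hom := fun i j => i = j; idm := fun i => eq_refl;
            comp := fun a b c g f => eq_trans f g |}.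
  - intros; reflexivity.
  - intros a b f; destruct f; reflexivity.
  - intros a b c d h g f; destruct f, g, h; reflexivity.
Defined.

Definition seqF (A : Category) (Y : nat -> Ob A) : Functor discr A.
Proof.
  refine {| Fob := (Y : discr -> A);
            Fmap := fun i j (p : Hom discr i j) =>
              match p in _ = j return Hom A (Y i) (Y j) with eq_refl => idm _ end |}.
  - intros; reflexivity.
  - intros x y z g f; simpl in *; destruct f, g; simpl; symmetry; apply comp_id_l.
Defined.

Definition IsNatCoproduct (A : Category) (Y : nat -> Ob A) (L : A)
    (inj : forall n : nat, Hom A (Y n) L) : Prop :=
  IsColimit discr A (seqF A Y) L inj.

Lemma family_is_cocone (A : Category) (Y : nat -> Ob A) (Z : A)
  (k : forall n : nat, Hom A (Y n) Z) : IsCocone discr A (seqF A Y) Z k.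
Proof. intros i j u; simpl in u; destruct u; simpl; apply comp_id_r. Qed.

Definition SolvesChain (A : Category) (H : Functor A A) (C : A)
    (c : Hom A C (H C)) (Y : nat -> Ob A)
    (f : forall n, Hom A (Y n) (H (Y (S n)))) (g : forall n, Hom A (Y n) C) : Prop :=
  forall n, c \o g n = Fmap H (g (S n)) \o f n.

Section Coproduct.
Variables (A : Category) (Y : nat -> Ob A) (L : A) (inj : forall n, Hom A (Y n) L).
Hypothesis Hcop : IsNatCoproduct A Y L inj.

Lemma copair_exists (Z : A) (k : forall n, Hom A (Y n) Z) :
  exists K : Hom A L Z, forall n, K \o inj n = k n.
Proof.
  destruct Hcop as [_ U].
  destruct (U Z k (family_is_cocone A Y Z k)) as [K [HK _]].
  exists K; exact HK.
Qed.

Lemma copair_ext (Z : A) (K K' : Hom A L Z) :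
  (forall n, K \o inj n = K' \o inj n) -> K = K'.
Proof.
  intro Hcomp.
  destruct Hcop as [_ U].
  destruct (U Z (fun n => K' \o inj n) (family_is_cocone A Y Z _)) as [W [_ HW]].
  transitivity W; [symmetry|]; apply HW; [exact Hcomp | reflexivity].
Qed.

Section Solutions.
Variables (H : Functor A A) (C : A) (c : Hom A C (H C)).
Hypothesis Hterm : IsTerminalCoalgebra A H C c.
Variable f : forall n, Hom A (Y n) (H (Y (S n))).

Lemma chain_coalgebra :
  exists z : Hom A L (H L), forall n, z \o inj n = Fmap H (inj (S n)) \o f n.
Proof. apply copair_exists. Qed.

Lemma solution_copair_is_hom (z : Hom A L (H L))
  (Hz : forall n, z \o inj n = Fmap H (inj (S n)) \o f n)
  (g : forall n, Hom A (Y n) C) (Hg : SolvesChain A H C c Y f g)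
  (G : Hom A L C) (HG : forall n, G \o inj n = g n) :
  c \o G = Fmap H G \o z.
Proof.
  apply copair_ext; intro n.
  rewrite <- !comp_assoc, Hz, HG, Hg, comp_assoc, <- Fmap_comp, HG.
  reflexivity.
Qed.

Lemma chain_solution_exists : exists g, SolvesChain A H C c Y f g.
Proof.
  destruct chain_coalgebra as [z Hz].
  destruct (Hterm L z) as [h [Hh _]].
  exists (fun n => h \o inj n); intro n.
  rewrite comp_assoc, Hh, <- comp_assoc, Hz, comp_assoc, <- Fmap_comp.
  reflexivity.
Qed.

Lemma chain_solution_unique (g g' : forall n, Hom A (Y n) C) :
  SolvesChain A H C c Y f g -> SolvesChain A H C c Y f g' ->
  forall n, g n = g' n.
Proof.
  intros Hg Hg' n.
  destruct chain_coalgebra as [z Hz].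
  destruct (copair_exists C g) as [G HG].
  destruct (copair_exists C g') as [G' HG'].
  destruct (Hterm L z) as [h [_ Hu]].
  rewrite <- HG, <- HG'.
  rewrite <- (Hu G (solution_copair_is_hom z Hz g Hg G HG)).
  rewrite <- (Hu G' (solution_copair_is_hom z Hz g' Hg' G' HG')).
  reflexivity.
Qed.
End Solutions.
End Coproduct.

Section Unfolding.
Variables (A : Category) (H M : Functor A A).
Variable lam : forall X : A, Hom A (M (H X)) (H (M X)).
Hypothesis lam_natural : forall X Y (f : Hom A X Y),
  lam Y \o Fmap M (Fmap H f) = Fmap H (Fmap M f) \o lam X.
Variables (C : A) (c : Hom A C (H C)) (b : Hom A (M C) C).
Hypothesis Hb : IsLambdaInterpretation A H M lam C c b.

Lemma interp_transfer (Y Y' : A) (f : Hom A Y (H Y'))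
  (g0 : Hom A Y C) (g1 : Hom A Y' C) :
  c \o g0 = Fmap H g1 \o f ->
  c \o (b \o Fmap M g0) = Fmap H (b \o Fmap M g1) \o (lam Y' \o Fmap M f).
Proof.
  intro E. unfold IsLambdaInterpretation in Hb.
  rewrite comp_assoc, Hb, <- !comp_assoc, <- Fmap_comp, E, Fmap_comp.
  rewrite !comp_assoc. f_equal. rewrite <- !comp_assoc. f_equal.
  rewrite lam_natural, Fmap_comp, comp_assoc. reflexivity.
Qed.

Variables (X : A) (e : Hom A X (H (M X))).

Fixpoint iterM (n : nat) : A :=
  match n with 0 => X | S n => M (iterM n) end.

Fixpoint unfold_map (n : nat) : Hom A (iterM n) (H (iterM (S n))) :=
  match n return Hom A (iterM n) (H (iterM (S n))) with
  | 0 => e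
  | S n => lam (iterM (S n)) \o Fmap M (unfold_map n)
  end.

Lemma solution_shift (g : forall n, Hom A (iterM n) C) :
  SolvesChain A H C c iterM unfold_map g ->
  SolvesChain A H C c (fun n => iterM (S n)) (fun n => unfold_map (S n))
    (fun n => b \o Fmap M (g n)).
Proof. intros Hg n; exact (interp_transfer _ _ _ _ _ (Hg n)). Qed.

Fixpoint iterate_interp (d : Hom A X C) (n : nat) : Hom A (iterM n) C :=
  match n return Hom A (iterM n) C with
  | 0 => d
  | S n => b \o Fmap M (iterate_interp d n)
  end.

Lemma iterate_interp_solves (d : Hom A X C) :
  c \o d = Fmap H b \o (Fmap H (Fmap M d) \o e) ->
  SolvesChain A H C c iterM unfold_map (iterate_interp d).
Proof.
  intros Hd n; induction n as [|n IH].
  - simpl. rewrite Hd, comp_assoc, <- Fmap_comp. reflexivity.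
  - exact (interp_transfer _ _ _ _ _ IH).
Qed.
End Unfolding.

Theorem mainTheorem13 (A : Category) (HAcc : Cocomplete A)
  (H : Functor A A) (C : A) (c : Hom A C (H C))
  (Hterm : IsTerminalCoalgebra A H C c)
  (M : Functor A A) (eta : forall X : A, Hom A X (M X)) (Heta : IsNatPoint A M eta)
  (lam : forall X : A, Hom A (M (H X)) (H (M X)))
  (Hlam : IsDistributiveLaw A H M eta lam)
  (b : Hom A (M C) C) (Hb : IsLambdaInterpretation A H M lam C c b) :
  forall (X : A) (e : Hom A X (H (M X))),
    exists! edag : Hom A X C,
      c \o edag = Fmap H b \o (Fmap H (Fmap M edag) \o e).
Proof.
  intros X e.
  pose (Y := iterM A M X); pose (f := unfold_map A H M lam X e).
  destruct (HAcc discr (seqF A Y)) as [L [inj Hcop]].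
  destruct (HAcc discr (seqF A (fun n => Y (S n)))) as [L' [inj' Hcop']].
  destruct (chain_solution_exists A Y L inj Hcop H C c Hterm f) as [h Hh].
  (* Uniqueness on the shifted chain identifies h_1 with b . M h_0. *)
  assert (h_succ : h 1 = b \o Fmap M (h 0)).
  { exact (chain_solution_unique A _ L' inj' Hcop' H C c Hterm _ _ _
             (fun n => Hh (S n))
             (solution_shift A H M lam (proj1 Hlam) C c b Hb X e h Hh) 0). }
  exists (h 0); split.
  - transitivity (Fmap H (h 1) \o e); [exact (Hh 0)|].
    rewrite h_succ, Fmap_comp, comp_assoc. reflexivity.
  - intros d Hd.
    exact (chain_solution_unique A Y L inj Hcop H C c Hterm f h _ Hh
             (iterate_interp_solves A H M lam (proj1 Hlam) C c b Hb X e d Hd) 0).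
Qed.
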